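(* Let $n,d\ge1$, $p>d$, $\Delta\in\mathbb{R}^{nd\times nd}$ symmetric with $d\times d$ blocks, $\Delta_{ii}=0$, $Z^{\top}=[I_d,\dots,I_d]$, $A=ZZ^{\top}+\Delta$, $f(S)=\langle A,SS^{\top}\rangle$, $\delta>0$. Suppose $S$ is a second-order critical point of $f$ with $d_F(S,Z)\le\delta\sqrt{d/n}\,\|\Delta\|_{\mathrm{op}}$. Then for every $1\le i\le n$, \[ \lambda_{\min}(\Lambda_{ii})\ge n-\frac{\delta^2d\|\Delta\|_{\mathrm{op}}^2}{2n}-\max_{1\le k\le n}\Big\|\sum_{j\ne k}\Delta_{kj}S_j\Big\|_{\mathrm{op}}, \] and \[ \max_{1\le i\le n}\Big\|\sum_{j\ne i}\Delta_{ij}S_j\Big\|_{\mathrm{op}}\le\delta\sqrt{\frac dn}\,\|\Delta\|_{\mathrm{op}}\max_{1\le i\le n}\|\Delta_i\|_{\mathrm{op}}+\max_{1\le i\le n}\|\Delta_i^{\top}Z\|_{\mathrm{op}}. \]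
   Context: $S\in\mathbb{R}^{nd\times p}$ has $d\times p$ blocks $S_i$ with $S_iS_i^{\top}=I_d$; $A_{ij}=I_d+\Delta_{ij}$; $\Delta_i^{\top}=[\Delta_{i1},\dots,\Delta_{in}]$ is the $i$-th block row of $\Delta$ ($\Delta_i$ the $i$-th block column), and $\Delta_i^{\top}Z=\sum_j\Delta_{ij}$. $\Lambda_{ii}=\frac12\sum_j(S_iS_j^{\top}A_{ji}+A_{ij}S_jS_i^{\top})$; $T_{S_i}=\{Y\in\mathbb{R}^{d\times p}:S_iY^{\top}+YS_i^{\top}=0\}$. $S$ is a second-order critical point if $\sum_jA_{ij}S_j=\Lambda_{ii}S_i$ for all $i$ and $\sum_i\langle\Lambda_{ii},\dot S_i\dot S_i^{\top}\rangle\ge\sum_{i,j}\langle A_{ij},\dot S_i\dot S_j^{\top}\rangle$ for all $\dot S_i\in T_{S_i}$. $d_F(S,Z)=\min\{(\sum_i\|S_i-Q\|_F^2)^{1/2}:QQ^{\top}=I_d,Q\in\mathbb{R}^{d\times p}\}$. *)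

From HB Require Import structures.
From mathcomp Require Import all_boot all_order all_algebra.
From mathcomp Require Import classical_sets reals.
Set Implicit Arguments. Unset Strict Implicit. Unset Printing Implicit Defensive.
Import Order.TTheory GRing.Theory Num.Theory.
Local Open Scope classical_set_scope.
Local Open Scope ring_scope.

Section Defs.
Variable R : realType.

Definition vnorm k (x : 'cV[R]_k) : R := Num.sqrt (\sum_(i < k) x i 0 ^+ 2).

Definition opnorm m k (M : 'M[R]_(m, k)) : R :=
  sup [set vnorm (M *m x) | x in [set x : 'cV[R]_k | vnorm x = 1]].

Definition fnorm m k (M : 'M[R]_(m, k)) : R :=
  Num.sqrt (\sum_(i < m) \sum_(j < k) M i j ^+ 2).

Definition frob m k (X Y : 'M[R]_(m, k)) : R := \tr (X^T *m Y).

(* d_F(S, Z) = min over Q with Q Q^T = I_d of (sum_i ||S_i - Q||_F^2)^(1/2) *)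
Definition dF n d p (S : 'I_n -> 'M[R]_(d, p)) : R :=
  inf [set Num.sqrt (\sum_(i < n) fnorm (S i - Q) ^+ 2)
      | Q in [set Q : 'M[R]_(d, p) | Q *m Q^T = 1%:M]].

(* blocks of A = Z Z^T + Delta : A_ij = I_d + Delta_ij *)
Definition Ablk n d (Delta : 'I_n -> 'I_n -> 'M[R]_d) (i j : 'I_n) : 'M[R]_d :=
  1%:M + Delta i j.

Definition Lambda n d p (Delta : 'I_n -> 'I_n -> 'M[R]_d)
    (S : 'I_n -> 'M[R]_(d, p)) (i : 'I_n) : 'M[R]_d :=
  (2%:R)^-1 *: \sum_(j < n) (S i *m (S j)^T *m Ablk Delta j i
                             + Ablk Delta i j *m S j *m (S i)^T).

Definition tangent d p (Si Y : 'M[R]_(d, p)) : Prop :=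
  Si *m Y^T + Y *m Si^T = 0.

(* S (with S_i S_i^T = I_d) is a second-order critical point of f(S) = <A, S S^T> *)
Definition second_order_critical n d p (Delta : 'I_n -> 'I_n -> 'M[R]_d)
    (S : 'I_n -> 'M[R]_(d, p)) : Prop :=
  (forall i, S i *m (S i)^T = 1%:M) /\
  (forall i, \sum_(j < n) Ablk Delta i j *m S j = Lambda Delta S i *m S i) /\
  (forall Sdot : 'I_n -> 'M[R]_(d, p), (forall i, tangent (S i) (Sdot i)) ->
     \sum_(i < n) frob (Lambda Delta S i) (Sdot i *m (Sdot i)^T)
     >= \sum_(i < n) \sum_(j < n) frob (Ablk Delta i j) (Sdot i *m (Sdot j)^T)).

Definition bigDelta n d (Delta : 'I_n -> 'I_n -> 'M[R]_d) :=
  \mxblock_(i < n, j < n) Delta i j.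

Definition blockcol n d (Delta : 'I_n -> 'I_n -> 'M[R]_d) (i : 'I_n) :=
  \mxcol_(j < n) Delta j i.

End Defs.

(* Fix any [Q] with orthonormal rows, and write [E_i = sum_(j <> i) Delta_ij S_j].

   Eigenvalues of [Lambda_ii]: a second-order perturbation supported on block [i],
   in the direction [v^T x] with [x] in the kernel of [S_i], shows that every
   eigenvalue [lam] of [Lambda_ii] is at least 1.  For a unit left eigenvector [v],
   pairing the first-order condition [Lambda_ii S_i = sum_j S_j + E_i] with [v Q]
   gives [lam >= lam <v S_i, v Q> = sum_j <v S_j, v Q> + <v E_i, v Q>], and each
   [<v S_j, v Q> >= 1 - |S_j - Q|_F^2 / 2] because [v S_j] and [v Q] are unit
   vectors.  Hence [lam >= n - sum_j |S_j - Q|_F^2 / 2 - |E_i|_op], and taking the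
   infimum over [Q] turns the sum into [d_F(S, Z)^2].

   Off-diagonal sums: for a unit vector [x],
   [E_i x = Delta_i^T [(S_j - Q) x]_j + (sum_j Delta_ij) Q x], so
   [|E_i|_op <= |Delta_i|_op (sum_j |S_j - Q|_F^2)^(1/2) + |Delta_i^T Z|_op];
   again take the infimum over [Q]. *)

From HB Require Import structures.
From mathcomp Require Import all_boot all_order all_algebra.
From mathcomp Require Import boolp classical_sets reals.
From mathcomp Require Import ring lra.
Import Order.TTheory GRing.Theory Num.Theory.
Set Implicit Arguments. Unset Strict Implicit. Unset Printing Implicit Defensive.
Local Open Scope ring_scope.

Lemma exists_nonzero_kernel_row (F : fieldType) m k (A : 'M[F]_(m, k)) :
  (m < k)%N -> exists2 x : 'rV[F]_k, x != 0 & A *m x^T = 0.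
Proof.
move=> lt_mk; exists (nz_row (kermx A^T)).
  rewrite nz_row_eq0 -mxrank_eq0 mxrank_ker mxrank_tr -lt0n subn_gt0.
  exact: leq_ltn_trans (rank_leq_row A) lt_mk.
apply: trmx_inj; rewrite trmx_mul trmxK trmx0.
by apply/sub_kermxP; exact: nz_row_sub.
Qed.

Lemma le_of_sqr_le_mul (R : realFieldType) (a c : R) :
  0 <= c -> a ^+ 2 <= c * a -> a <= c.
Proof. by move=> c_ge0 h; nra. Qed.

Section Frobenius.
Variable R : realType.

Fact frob_is_bilinear m k : bilinear_for
  (GRing.Scale.Law.clone _ _ *%R _) (GRing.Scale.Law.clone _ _ *%R _) (@frob R m k).
Proof.
split=> [N|M] a X Y /=; rewrite /frob.
- by rewrite linearD linearZ /= mulmxDl -scalemxAl mxtraceD mxtraceZ.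
- by rewrite mulmxDr -scalemxAr mxtraceD mxtraceZ.
Qed.

HB.instance Definition _ m k := bilinear_isBilinear.Build R
  'M[R]_(m, k) 'M[R]_(m, k) R _ _ (@frob R m k) (frob_is_bilinear m k).

Lemma frobE m k (M N : 'M[R]_(m, k)) : frob M N = \sum_i \sum_j M i j * N i j.
Proof.
rewrite /frob /mxtrace exchange_big /=; apply: eq_bigr => j _.
by rewrite !mxE; apply: eq_bigr => i _; rewrite !mxE.
Qed.

Lemma frobC m k (M N : 'M[R]_(m, k)) : frob M N = frob N M.
Proof. by rewrite !frobE; apply: eq_bigr => i _; apply: eq_bigr => j _; rewrite mulrC. Qed.

Lemma frob_mull m k l (A : 'M[R]_(m, k)) (B : 'M[R]_(k, l)) C :
  frob (A *m B) C = frob B (A^T *m C).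
Proof. by rewrite /frob trmx_mul mulmxA. Qed.

Lemma frob_mulr m k l (A : 'M[R]_(m, k)) (B : 'M[R]_(k, l)) C :
  frob (A *m B) C = frob A (C *m B^T).
Proof. by rewrite /frob trmx_mul -mulmxA mxtrace_mulC mulmxA. Qed.

Lemma frob_trmx m k (M N : 'M[R]_(m, k)) : frob M^T N^T = frob M N.
Proof. by rewrite /frob trmxK mxtrace_mulC -mxtrace_tr trmx_mul trmxK. Qed.

Lemma frob_ge0 m k (M : 'M[R]_(m, k)) : 0 <= frob M M.
Proof.
by rewrite frobE !sumr_ge0 // => i _; rewrite sumr_ge0 // => j _; rewrite -expr2 sqr_ge0.
Qed.

Lemma frob_eq0 m k (M : 'M[R]_(m, k)) : (frob M M == 0) = (M == 0).
Proof.
apply/idP/eqP => [|->]; last by rewrite linear0l.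
have sq_ge0 (x : R) : 0 <= x * x by rewrite -expr2 sqr_ge0.
rewrite frobE psumr_eq0 => [/allP M0|i _]; last exact: sumr_ge0.
apply/matrixP => i j; have /eqP := M0 i (mem_index_enum _).
rewrite mxE; move/eqP; rewrite psumr_eq0 // => /allP /(_ j (mem_index_enum _)).
by rewrite mulf_eq0 orbb => /eqP.
Qed.

Lemma fnormE m k (M : 'M[R]_(m, k)) : fnorm M = Num.sqrt (frob M M).
Proof. by rewrite /fnorm frobE. Qed.

Lemma vnormE k (x : 'cV[R]_k) : vnorm x = fnorm x.
Proof. by rewrite /vnorm /fnorm; congr Num.sqrt; apply: eq_bigr => i _; rewrite big_ord1. Qed.

Lemma fnorm_ge0 m k (M : 'M[R]_(m, k)) : 0 <= fnorm M.
Proof. by rewrite fnormE sqrtr_ge0. Qed.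

Lemma fnorm_sq m k (M : 'M[R]_(m, k)) : fnorm M ^+ 2 = frob M M.
Proof. by rewrite fnormE sqr_sqrtr // frob_ge0. Qed.

Lemma fnorm_eq0 m k (M : 'M[R]_(m, k)) : (fnorm M == 0) = (M == 0).
Proof. by rewrite -sqrf_eq0 fnorm_sq frob_eq0. Qed.

Lemma fnorm_gt0 m k (M : 'M[R]_(m, k)) : (0 < fnorm M) = (M != 0).
Proof. by rewrite lt0r fnorm_eq0 fnorm_ge0 andbT. Qed.

Lemma fnorm0 m k : fnorm (0 : 'M[R]_(m, k)) = 0.
Proof. by apply/eqP; rewrite fnorm_eq0. Qed.

Lemma fnormZ m k a (M : 'M[R]_(m, k)) : fnorm (a *: M) = `|a| * fnorm M.
Proof.
rewrite !fnormE linearZl_LR linearZr_LR /=.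
by rewrite mulrA -expr2 sqrtrM ?sqr_ge0 // sqrtr_sqr.
Qed.

Lemma fnorm_trmx m k (M : 'M[R]_(m, k)) : fnorm M^T = fnorm M.
Proof. by rewrite !fnormE frob_trmx. Qed.

Lemma cauchy_schwarz_frob m k (M N : 'M[R]_(m, k)) : frob M N <= fnorm M * fnorm N.
Proof.
have [->|M0] := eqVneq M 0; first by rewrite linear0l fnorm0 mul0r.
have [->|N0] := eqVneq N 0; first by rewrite linear0r fnorm0 mulr0.
have := frob_ge0 (fnorm N *: M - fnorm M *: N).
rewrite linearBl !linearBr !linearZl_LR !linearZr_LR /= -!fnorm_sq (frobC N M).
have := fnorm_gt0 M; have := fnorm_gt0 N; rewrite M0 N0.
move: (frob M N) (fnorm M) (fnorm N) => t a b b_gt0 a_gt0 H.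
have ab_gt0 : 0 < a * b by rewrite mulr_gt0.
rewrite -subr_ge0 -(pmulr_rge0 _ ab_gt0); nra.
Qed.

Lemma normr_frob_le m k (M N : 'M[R]_(m, k)) : `|frob M N| <= fnorm M * fnorm N.
Proof.
rewrite ler_norml cauchy_schwarz_frob andbT lerNl -linearNl.
by rewrite -[fnorm M]mul1r -normrN1 -fnormZ scaleN1r cauchy_schwarz_frob.
Qed.

Lemma ler_fnormD m k (A B : 'M[R]_(m, k)) : fnorm (A + B) <= fnorm A + fnorm B.
Proof.
rewrite -(ler_pXn2r (ltn0Sn 1)) ?nnegrE ?addr_ge0 ?fnorm_ge0 //.
rewrite fnorm_sq linearDl !linearDr /= sqrrD -!fnorm_sq (frobC B A).
have := cauchy_schwarz_frob A B; lra.
Qed.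

Lemma ler_fnormM m k l (A : 'M[R]_(m, k)) (B : 'M[R]_(k, l)) :
  fnorm (A *m B) <= fnorm A * fnorm B.
Proof.
rewrite -(ler_pXn2r (ltn0Sn 1)) ?nnegrE ?mulr_ge0 ?fnorm_ge0 // exprMn !fnorm_sq.
have rowsA : frob A A = \sum_i fnorm (row i A)^T ^+ 2.
  rewrite frobE; apply: eq_bigr => i _; rewrite fnorm_sq frobE.
  by apply: eq_bigr => j _; rewrite big_ord1 !mxE.
have colsB : frob B B = \sum_j fnorm (col j B) ^+ 2.
  rewrite frobE exchange_big; apply: eq_bigr => j _; rewrite fnorm_sq frobE.
  by apply: eq_bigr => t _; rewrite big_ord1 !mxE.
rewrite rowsA colsB mulr_suml frobE; apply: ler_sum => i _.
rewrite mulr_sumr; apply: ler_sum => j _.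
have -> : (A *m B) i j = frob (row i A)^T (col j B).
  by rewrite frobE mxE; apply: eq_bigr => t _; rewrite big_ord1 !mxE.
rewrite -expr2 -exprMn -real_normK ?num_real //.
by rewrite lerXn2r ?nnegrE ?mulr_ge0 ?fnorm_ge0 // normr_frob_le.
Qed.

Lemma fnorm_normalize m k (M : 'M[R]_(m, k)) : M != 0 -> fnorm ((fnorm M)^-1 *: M) = 1.
Proof.
by move=> M0; rewrite fnormZ ger0_norm ?invr_ge0 ?fnorm_ge0 // mulVf // fnorm_eq0.
Qed.

Lemma eigenvalue_unit_row m (A : 'M[R]_m) lam :
  eigenvalue A lam -> exists2 v : 'rV[R]_m, fnorm v = 1 & v *m A = lam *: v.
Proof.
move=> /eigenvalueP [v vA v0]; exists ((fnorm v)^-1 *: v); first exact: fnorm_normalize.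
by rewrite -scalemxAl vA !scalerA mulrC.
Qed.

Lemma fnorm_mxcol_sqr r k (m_ : 'I_r -> nat) (B : forall j, 'M[R]_(m_ j, k)) :
  fnorm (\mxcol_j B j) ^+ 2 = \sum_j fnorm (B j) ^+ 2.
Proof.
rewrite fnorm_sq /frob tr_mxcol mul_mxrow_mxcol raddf_sum.
by apply: eq_bigr => j _; rewrite fnorm_sq.
Qed.

Lemma fnorm_mulmx_orthor m k l (A : 'M[R]_(m, k)) (Q : 'M[R]_(k, l)) :
  Q *m Q^T = 1%:M -> fnorm (A *m Q) = fnorm A.
Proof. by move=> QQt; rewrite !fnormE frob_mulr -mulmxA QQt mulmx1. Qed.

Lemma ler_fnorm_orthor_mulmx m k l (Q : 'M[R]_(m, k)) (B : 'M[R]_(k, l)) :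
  Q *m Q^T = 1%:M -> fnorm (Q *m B) <= fnorm B.
Proof.
move=> QQt; apply: le_of_sqr_le_mul; first exact: fnorm_ge0.
rewrite fnorm_sq frob_mull; apply: le_trans (cauchy_schwarz_frob _ _) _.
rewrite -[fnorm (Q^T *m _)]fnorm_trmx trmx_mul trmxK (fnorm_mulmx_orthor _ QQt).
by rewrite fnorm_trmx.
Qed.

Lemma frob_orthor_mul_ge m k l (v : 'M[R]_(m, k)) (A B : 'M[R]_(k, l)) :
  A *m A^T = 1%:M -> B *m B^T = 1%:M -> fnorm v = 1 ->
  1 - fnorm (A - B) ^+ 2 / 2 <= frob (v *m A) (v *m B).
Proof.
move=> AAt BBt v1.
have : fnorm (v *m A - v *m B) ^+ 2 <= fnorm (A - B) ^+ 2.
  rewrite lerXn2r ?nnegrE ?fnorm_ge0 // -mulmxBr.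
  by rewrite -[X in _ <= X]mul1r -v1 ler_fnormM.
rewrite fnorm_sq linearBl !linearBr /= -!fnorm_sq !(fnorm_mulmx_orthor v) //.
by rewrite v1 (frobC (v *m B)); lra.
Qed.

End Frobenius.

Section OperatorNorm.
Variable R : realType.

Local Open Scope classical_set_scope.
Local Notation unit_images M := [set vnorm (M *m x) | x in [set x | vnorm x = 1]].

Lemma opnorm_has_ubound m k (M : 'M[R]_(m, k)) : has_ubound (unit_images M).
Proof.
exists (fnorm M) => _ [x /= x1 <-]; rewrite !vnormE in x1 *.
by rewrite -[fnorm M]mulr1 -x1 ler_fnormM.
Qed.

Lemma opnorm_ge0 m k (M : 'M[R]_(m, k)) : 0 <= opnorm M.
Proof.
have [[x x1]|no_unit] := pselect (exists x : 'cV[R]_k, vnorm x = 1).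
  apply: le_trans (ub_le_sup (opnorm_has_ubound M) _); last by exists x.
  by rewrite vnormE fnorm_ge0.
rewrite /opnorm (_ : unit_images M = set0) ?sup0 //.
by apply/seteqP; split => // _ [x /= x1 _]; apply: no_unit; exists x.
Qed.

Lemma opnorm_le m k (M : 'M[R]_(m, k)) c : 0 <= c ->
  (forall x : 'cV[R]_k, fnorm x = 1 -> fnorm (M *m x) <= c) -> opnorm M <= c.
Proof.
move=> c_ge0 Mc; rewrite /opnorm.
have [[x x1]|no_unit] := pselect (exists x : 'cV[R]_k, vnorm x = 1).
  apply: ge_sup; first by exists (vnorm (M *m x)); exists x.
  by move=> _ [y /= y1 <-]; rewrite !vnormE in y1 *; exact: Mc.
rewrite (_ : unit_images M = set0) ?sup0 //.
by apply/seteqP; split => // _ [x /= x1 _]; apply: no_unit; exists x.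
Qed.

Lemma ler_fnorm_opnorm m k (M : 'M[R]_(m, k)) (x : 'cV[R]_k) :
  fnorm (M *m x) <= opnorm M * fnorm x.
Proof.
have [->|x0] := eqVneq x 0; first by rewrite mulmx0 !fnorm0 mulr0.
have x1 : vnorm ((fnorm x)^-1 *: x) = 1 by rewrite vnormE fnorm_normalize.
have := ub_le_sup (opnorm_has_ubound M) (ex_intro2 _ _ _ x1 erefl).
rewrite -scalemxAr vnormE fnormZ ger0_norm ?invr_ge0 ?fnorm_ge0 //.
by rewrite ler_pdivrMl ?fnorm_gt0 // mulrC.
Qed.

Lemma ler_fnorm_row_opnorm m k (M : 'M[R]_(m, k)) (v : 'rV[R]_m) :
  fnorm (v *m M) <= opnorm M * fnorm v.
Proof.
apply: le_of_sqr_le_mul; first by rewrite mulr_ge0 ?opnorm_ge0 ?fnorm_ge0.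
rewrite fnorm_sq frob_mulr; apply: le_trans (cauchy_schwarz_frob _ _) _.
have vMMt : fnorm (v *m M *m M^T) <= opnorm M * fnorm (v *m M).
  by rewrite -fnorm_trmx trmx_mul trmxK -[fnorm (v *m M)]fnorm_trmx ler_fnorm_opnorm.
by rewrite [opnorm M * _]mulrC -mulrA ler_wpM2l ?fnorm_ge0.
Qed.

End OperatorNorm.

Section DistanceToConsensus.
Variables (R : realType) (n d p : nat) (S : 'I_n -> 'M[R]_(d, p)).
Hypothesis d_le_p : (d <= p)%N.

Definition sqdist (Q : 'M[R]_(d, p)) := \sum_(i < n) fnorm (S i - Q) ^+ 2.

Lemma pid_mx_orthor : (pid_mx d : 'M[R]_(d, p)) *m (pid_mx d)^T = 1%:M.
Proof. by rewrite tr_pid_mx mul_pid_mx minnn (minn_idPr d_le_p) pid_mx_1. Qed.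

Lemma dF_ge g : (forall Q, Q *m Q^T = 1%:M -> g <= Num.sqrt (sqdist Q)) -> g <= dF S.
Proof.
move=> gQ; apply: lb_le_inf; first by eexists; exists (pid_mx d); first exact: pid_mx_orthor.
by move=> _ [Q /= QQt <-]; exact: gQ.
Qed.

Lemma dF_ge0 : 0 <= dF S.
Proof. by apply: dF_ge => Q _; exact: sqrtr_ge0. Qed.

Lemma le_dF_sqr c : (forall Q, Q *m Q^T = 1%:M -> c <= sqdist Q) -> c <= dF S ^+ 2.
Proof.
move=> cQ; have [c_le0|c_gt0] := lerP c 0; first exact: le_trans c_le0 (sqr_ge0 _).
have c_dF : Num.sqrt c <= dF S.
  by apply: dF_ge => Q QQt; rewrite ler_sqrt ?cQ // (le_trans (ltW c_gt0)) ?cQ.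
by rewrite -(sqr_sqrtr (ltW c_gt0)) lerXn2r ?nnegrE ?sqrtr_ge0 ?(le_trans _ c_dF) ?sqrtr_ge0.
Qed.

Lemma ler_mul_dF a e t : 0 <= a ->
  (forall Q, Q *m Q^T = 1%:M -> t <= a * Num.sqrt (sqdist Q) + e) -> t <= a * dF S + e.
Proof.
move=> a_ge0 tQ; rewrite -lerBlDr.
have [a0|a_neq0] := eqVneq a 0.
  by rewrite a0 mul0r subr_le0; have := tQ _ pid_mx_orthor; rewrite a0 mul0r add0r.
have a_gt0 : 0 < a by rewrite lt0r a_neq0.
rewrite mulrC -ler_pdivrMr //; apply: dF_ge => Q QQt.
by rewrite ler_pdivrMr // mulrC lerBlDr tQ.
Qed.

End DistanceToConsensus.

Section CriticalPoint.
Variables (R : realType) (n d p : nat).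
Variables (Delta : 'I_n -> 'I_n -> 'M[R]_d) (S : 'I_n -> 'M[R]_(d, p)).
Hypothesis Delta_sym : forall i j, Delta i j = (Delta j i)^T.
Hypothesis Delta_diag0 : forall i, Delta i i = 0.

Definition offdiag_sum i := \sum_(j < n | j != i) Delta i j *m S j.

Lemma offdiag_sumE i : offdiag_sum i = \sum_j Delta i j *m S j.
Proof. by rewrite /offdiag_sum [RHS](bigD1 i) //= Delta_diag0 mul0mx add0r. Qed.

Lemma opnorm_offdiag_le i Q : Q *m Q^T = 1%:M ->
  opnorm (offdiag_sum i) <= opnorm (blockcol Delta i) * Num.sqrt (sqdist S Q)
                  + opnorm (\sum_j Delta i j).
Proof.
move=> QQt; apply: opnorm_le => [|x x1].
  by rewrite addr_ge0 ?mulr_ge0 ?opnorm_ge0 ?sqrtr_ge0.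
set Y := \mxcol_j ((S j - Q) *m x).
have -> : offdiag_sum i *m x = (blockcol Delta i)^T *m Y + (\sum_j Delta i j) *m (Q *m x).
  rewrite offdiag_sumE /blockcol /Y tr_mxcol mul_mxrow_mxcol !mulmx_suml -big_split /=.
  by apply: eq_bigr => j _; rewrite -Delta_sym -mulmxDr mulmxBl subrK mulmxA.
have Y_le : fnorm Y <= Num.sqrt (sqdist S Q).
  rewrite -(ler_pXn2r (ltn0Sn 1)) ?nnegrE ?fnorm_ge0 ?sqrtr_ge0 //.
  rewrite fnorm_mxcol_sqr sqr_sqrtr; last by apply: sumr_ge0 => j _; exact: sqr_ge0.
  apply: ler_sum => j _.
  by rewrite lerXn2r ?nnegrE ?fnorm_ge0 // -[X in _ <= X]mulr1 -x1 ler_fnormM.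
apply: le_trans (ler_fnormD _ _) _; apply: lerD.
  rewrite -fnorm_trmx trmx_mul trmxK; apply: le_trans (ler_fnorm_row_opnorm _ _) _.
  by rewrite fnorm_trmx ler_wpM2l ?opnorm_ge0.
apply: le_trans (ler_fnorm_opnorm _ _) _.
by rewrite -[X in _ <= X]mulr1 ler_wpM2l ?opnorm_ge0 // -x1 ler_fnorm_orthor_mulmx.
Qed.

Hypothesis S_crit : second_order_critical Delta S.

Lemma Lambda_mulmx_S i : Lambda Delta S i *m S i = \sum_j S j + offdiag_sum i.
Proof.
have [_ [first_order _]] := S_crit.
rewrite -first_order offdiag_sumE /Ablk -big_split /=.
by apply: eq_bigr => j _; rewrite mulmxDl mul1mx.
Qed.

Lemma second_order_block i Y : tangent (S i) Y ->
  frob (Ablk Delta i i) (Y *m Y^T) <= frob (Lambda Delta S i) (Y *m Y^T).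
Proof.
move=> Yt; have [_ [_ second_order]] := S_crit.
pose Sd k := if k == i then Y else 0.
have Sd0 k : k != i -> Sd k = 0 by rewrite /Sd => /negbTE ->.
have Sd_tangent k : tangent (S k) (Sd k).
  rewrite /Sd; case: eqP => [->|_] //.
  by rewrite /tangent trmx0 mulmx0 mul0mx addr0.
have Sdi : Sd i = Y by rewrite /Sd eqxx.
have single (F : 'I_n -> R) : (forall k, k != i -> F k = 0) -> \sum_k F k = F i.
  by move=> F0; rewrite (bigD1 i) //= big1 ?addr0.
have := second_order Sd Sd_tangent.
rewrite single => [|k /Sd0 ->]; last by rewrite big1 // => l _; rewrite mul0mx linear0r.
rewrite single => [|l /Sd0 ->]; last by rewrite trmx0 mulmx0 linear0r.
rewrite single => [|k /Sd0 ->]; last by rewrite mul0mx linear0r.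
by rewrite Sdi.
Qed.

Lemma Lambda_eigenvalue_ge1 i lam : (d < p)%N ->
  eigenvalue (Lambda Delta S i) lam -> 1 <= lam.
Proof.
move=> d_lt_p /eigenvalueP [v vL v0].
have [x x0 Sx] := exists_nonzero_kernel_row (S i) d_lt_p.
set Y := v^T *m x.
have Yt : tangent (S i) Y.
  rewrite /tangent trmx_mul trmxK mulmxA Sx mul0mx add0r -mulmxA.
  by rewrite -[x]trmxK -trmx_mul Sx trmx0 mulmx0.
have YYt : Y *m Y^T = fnorm x ^+ 2 *: (v^T *m v).
  rewrite trmx_mul trmxK mulmxA -(mulmxA _ x) [x *m x^T]mx11_scalar mul_mx_scalar.
  by rewrite -scalemxAl fnorm_sq /frob mxtrace_mulC /mxtrace big_ord1.
have frob_vtv A : frob A (v^T *m v) = frob v (v *m A) by rewrite frobC frob_mull trmxK.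
have := second_order_block Yt.
rewrite YYt !linearZr_LR /= !frob_vtv /Ablk Delta_diag0 addr0 mulmx1 vL linearZr_LR /=.
rewrite -fnorm_sq ler_pM2l ?exprn_gt0 ?fnorm_gt0 //.
by rewrite ler_pMl ?exprn_gt0 ?fnorm_gt0.
Qed.

Lemma Lambda_eigenvalue_ge i lam Q : (d < p)%N ->
  eigenvalue (Lambda Delta S i) lam -> Q *m Q^T = 1%:M ->
  n%:R - sqdist S Q / 2 - opnorm (offdiag_sum i) <= lam.
Proof.
move=> d_lt_p eig QQt; have [SSt _] := S_crit.
have lam_ge0 : 0 <= lam := le_trans ler01 (Lambda_eigenvalue_ge1 d_lt_p eig).
have [v v1 vL] := eigenvalue_unit_row eig.
have key : lam * frob (v *m S i) (v *m Q)
    = \sum_j frob (v *m S j) (v *m Q) + frob (v *m offdiag_sum i) (v *m Q).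
  have := congr1 (fun M => frob (v *m M) (v *m Q)) (Lambda_mulmx_S i).
  rewrite /= mulmxA vL -scalemxAl linearZl_LR /= => ->.
  by rewrite mulmxDr mulmx_sumr linearDl linear_sumlz.
have Si_le : lam * frob (v *m S i) (v *m Q) <= lam.
  rewrite -[X in _ <= X]mulr1 ler_wpM2l //.
  by apply: le_trans (cauchy_schwarz_frob _ _) _; rewrite !fnorm_mulmx_orthor // v1 mulr1.
have Sj_ge j : 1 - fnorm (S j - Q) ^+ 2 / 2 <= frob (v *m S j) (v *m Q).
  exact: frob_orthor_mul_ge.
have E_ge : - opnorm (offdiag_sum i) <= frob (v *m offdiag_sum i) (v *m Q).
  have := normr_frob_le (v *m offdiag_sum i) (v *m Q).
  rewrite (fnorm_mulmx_orthor v QQt) v1 mulr1 ler_norml => /andP [+ _].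
  apply: le_trans; rewrite lerN2.
  by have := ler_fnorm_row_opnorm (offdiag_sum i) v; rewrite v1 mulr1.
have sum_ge : n%:R - sqdist S Q / 2 <= \sum_j frob (v *m S j) (v *m Q).
  apply: le_trans (ler_sum _ (fun j _ => Sj_ge j)).
  by rewrite sumrB sumr_const card_ord -mulr_suml.
lra.
Qed.

End CriticalPoint.

Theorem lemma5 (R : realType) (n d p : nat)
  (Delta : 'I_n -> 'I_n -> 'M[R]_d) (S : 'I_n -> 'M[R]_(d, p)) (delta : R) :
  (1 <= n)%N -> (1 <= d)%N -> (d < p)%N ->
  (forall i j, Delta i j = (Delta j i)^T) ->
  (forall i, Delta i i = 0) ->
  0 < delta ->
  second_order_critical Delta S ->
  dF S <= delta * Num.sqrt (d%:R / n%:R) * opnorm (bigDelta Delta) ->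
  (forall (i : 'I_n) (lam : R), eigenvalue (Lambda Delta S i) lam ->
     lam >= n%:R - delta ^+ 2 * d%:R * opnorm (bigDelta Delta) ^+ 2 / (2 * n%:R)
            - \big[Num.max/0]_(k < n)
                opnorm (\sum_(j < n | j != k) Delta k j *m S j))
  /\
  \big[Num.max/0]_(i < n) opnorm (\sum_(j < n | j != i) Delta i j *m S j)
  <= delta * Num.sqrt (d%:R / n%:R) * opnorm (bigDelta Delta)
       * \big[Num.max/0]_(i < n) opnorm (blockcol Delta i)
     + \big[Num.max/0]_(i < n) opnorm (\sum_(j < n) Delta i j).
Proof.
move=> n_gt0 _ d_lt_p Delta_sym Delta_diag0 delta_gt0 S_crit dF_le.
have d_le_p := ltnW d_lt_p.
set b := delta * _ * _ in dF_le *.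
have b_ge0 : 0 <= b by rewrite !mulr_ge0 ?sqrtr_ge0 ?opnorm_ge0 ?ltW.
have dF_sqr_le : dF S ^+ 2 <= b ^+ 2 by rewrite lerXn2r ?nnegrE ?dF_ge0.
split=> [i lam eig|].
  set m := \big[Num.max/0]_(k < n) _.
  have m_ge : opnorm (offdiag_sum Delta S i) <= m.
    exact: le_bigmax 0 (fun k => opnorm (offdiag_sum Delta S k)) i.
  have : 2 * (n%:R - m - lam) <= b ^+ 2.
    apply: le_trans dF_sqr_le; apply: le_dF_sqr => // Q QQt.
    have := Lambda_eigenvalue_ge Delta_diag0 S_crit d_lt_p eig QQt; lra.
  have -> : delta ^+ 2 * d%:R * opnorm (bigDelta Delta) ^+ 2 / (2 * n%:R) = b ^+ 2 / 2.
    rewrite /b !exprMn sqr_sqrtr ?divr_ge0 //; field.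
    by rewrite pnatr_eq0 -lt0n.
  lra.
set M1 := \big[Num.max/0]_(i < n) opnorm (blockcol Delta i).
set M2 := \big[Num.max/0]_(i < n) opnorm (\sum_j Delta i j).
have M1_ge0 : 0 <= M1 by apply: bigmax_ge_id.
have M2_ge0 : 0 <= M2 by apply: bigmax_ge_id.
apply: bigmax_le => [|i _]; first by rewrite addr_ge0 // mulr_ge0.
apply: le_trans (_ : _ <= M1 * dF S + M2) _; last by rewrite mulrC lerD2r ler_wpM2r.
apply: ler_mul_dF => // Q QQt.
apply: le_trans (opnorm_offdiag_le S Delta_sym Delta_diag0 i QQt) _.
rewrite lerD ?ler_wpM2r ?sqrtr_ge0 //.
- exact: le_bigmax 0 (fun k => opnorm (blockcol Delta k)) i.
- exact: le_bigmax 0 (fun k => opnorm (\sum_j Delta k j)) i.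
Qed.
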